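(* Let $\xi$ be a jumping number of $\mathfrak a$ and let $F$ be an antinef divisor with integer coefficients such that $\xi=\xi_F$. Then there is a vertex $\nu$ with $\lambda(F,D;\nu)=\xi$ such that $v_\Gamma(\nu)\ge3$ or $\widehat d_\nu>0$. In particular every jumping number of $\mathfrak a$ lies in $\mathcal H^{\mathfrak a}_\nu$ for some vertex $\nu$ which is a star or satisfies $\widehat d_\nu>0$.
   Context: Setting: $R$ two-dimensional regular local ring with algebraically closed residue field; $\mathfrak a\subset R$ a proper nonzero complete ideal of finite colength; $\pi:X=X_{N+1}\to\cdots\to X_1=\operatorname{Spec}R$ a composition of point blowups with $\mathfrak a\mathcal O_X=\mathcal O_X(-D)$. $E_\nu$ strict, $E^*_\nu$ total transforms of exceptional divisors. Basis $\widehat E_\nu$ with $E_\mu\cdot\widehat E_\nu=-\delta_{\mu,\nu}$; $\mathfrak p_\nu$ the simple complete ideal with $\mathfrak p_\nu\mathcal O_X=\mathcal O_X(-\widehat E_\nu)$; $\mathfrak a=\prod\mathfrak p_\nu^{\widehat d_\nu}$, $D=\sum\widehat d_\nu\widehat E_\nu=\sum d_\nu E_\nu$. A divisor $F=\sum f_\nu E_\nu$ is antinef if $F\cdot E_\nu\le0$ for all $\nu$. Canonical divisor $K=\sum E^*_\nu=\sum k_\nu E_\nu$. Dual graph $\Gamma$ on vertices $1..N$, $\gamma\sim\eta$ iff $\gamma\neq\eta$ and $E_\gamma\cap E_\eta\ne\emptyset$; $v_\Gamma(\nu)$ = number of adjacent vertices; a star is a vertex of valence $\ge3$. $\lambda(F,D;\nu)=(f_\nu+k_\nu+1)/d_\nu$,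 $\xi_F=\min_\nu\lambda(F,D;\nu)$; the jumping numbers of $\mathfrak a$ (the values where the multiplier ideals $\mathcal J(\mathfrak a^\xi)=\Gamma(X,\mathcal O_X(K-\lfloor\xi D\rfloor))$ jump) are exactly the numbers $\xi_F$ with $F$ antinef with integer coefficients. $\mathcal H^{\mathfrak a}_\nu=\{\xi_F\mid F\text{ antinef},\ \xi_F=\lambda(F,D;\nu)\}$. *)

(* Combinatorial model of a composition of point blowups
   over a 2-dimensional regular local ring. *)
From HB Require Import structures.
From mathcomp Require Import all_boot all_order all_algebra.
Set Implicit Arguments. Unset Strict Implicit. Unset Printing Implicit Defensive.
Import Order.TTheory GRing.Theory Num.Theory.
Local Open Scope ring_scope.

(* Points O_0,...,O_{N-1} blown up in this order; O_0 is the closed point of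
   Spec R, E_i is the exceptional divisor of the blowup of O_i.
   [prox j i] means: O_j is proximate to O_i, i.e. O_j lies on the strict
   transform of E_i. *)
Definition blowup_proximity (N : nat) (prox : rel 'I_N) : Prop :=
  [/\ (forall j i : 'I_N, prox j i -> (i < j)%N),
      (* every point other than the first lies on the exceptional locus *)
      (forall j : 'I_N, (0 < j)%N -> exists i, prox j i),
      (forall j i k l : 'I_N, prox j i -> prox j k -> prox j l ->
         [\/ i = k, i = l | k = l]),
      (forall j i k : 'I_N, prox j i -> prox j k -> (i < k)%N -> prox k i) &
      (* E_i and E_k (i<k) meet in at most one point of the first neighbourhood of O_k *)
      (forall j j' i k : 'I_N, prox j i -> prox j' i -> prox j k -> prox j' k ->
         (i < k)%N -> j = j')].

(* U : row mu = coordinates of the strict transform E_mu in the basis E*_j: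
   E_mu = E*_mu - sum_{j proximate to mu} E*_j. *)
Definition Umx (N : nat) (prox : rel 'I_N) : 'M[rat]_N :=
  \matrix_(mu, j) ((mu == j)%:R - (prox j mu)%:R).

(* Intersection matrix (E_mu . E_nu), using E*_i . E*_j = - delta_ij. *)
Definition interE (N : nat) (prox : rel 'I_N) : 'M[rat]_N :=
  - (Umx prox *m (Umx prox)^T).

Definition dotE (N : nat) (prox : rel 'I_N) (f : 'I_N -> rat) (nu : 'I_N) : rat :=
  \sum_mu f mu * interE prox mu nu.

Definition antinef (N : nat) (prox : rel 'I_N) (f : 'I_N -> rat) : Prop :=
  forall nu, dotE prox f nu <= 0.

(* Coefficients k_nu of K = sum E*_nu = sum k_nu E_nu. *)
Definition kcoef (N : nat) (prox : rel 'I_N) (nu : 'I_N) : rat :=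
  ((const_mx 1 : 'rV[rat]_N) *m invmx (Umx prox)) 0 nu.

(* hatE_nu (row nu) in E-coordinates: E_mu . hatE_nu = - delta_{mu,nu}. *)
Definition hatEmx (N : nat) (prox : rel 'I_N) : 'M[rat]_N :=
  - invmx (interE prox).

(* Coefficients d_nu of D = sum hatd_nu hatE_nu = sum d_nu E_nu. *)
Definition Dcoef (N : nat) (prox : rel 'I_N) (hatd : 'I_N -> nat) (mu : 'I_N) : rat :=
  \sum_nu (hatd nu)%:R * hatEmx prox nu mu.

(* Valence in the dual graph: gamma ~ nu iff gamma != nu and E_gamma meets E_nu
   (strict transforms meet transversally, so iff E_gamma . E_nu > 0). *)
Definition valence (N : nat) (prox : rel 'I_N) (nu : 'I_N) : nat :=
  #|[set gamma : 'I_N | (gamma != nu) && (0 < interE prox gamma nu)]|.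

Definition lambdaF (N : nat) (prox : rel 'I_N) (hatd : 'I_N -> nat)
  (f : 'I_N -> int) (nu : 'I_N) : rat :=
  ((f nu)%:~R + kcoef prox nu + 1) / Dcoef prox hatd nu.

Definition is_xiF (N : nat) (prox : rel 'I_N) (hatd : 'I_N -> nat)
  (f : 'I_N -> int) (x : rat) : Prop :=
  (exists nu, lambdaF prox hatd f nu = x) /\ (forall mu, x <= lambdaF prox hatd f mu).

Definition int_antinef (N : nat) (prox : rel 'I_N) (f : 'I_N -> int) : Prop :=
  antinef prox (fun mu => (f mu)%:~R).

Definition jumping_number (N : nat) (prox : rel 'I_N) (hatd : 'I_N -> nat) (x : rat) : Prop :=
  exists f : 'I_N -> int, int_antinef prox f /\ is_xiF prox hatd f x.

Definition Hset (N : nat) (prox : rel 'I_N) (hatd : 'I_N -> nat) (nu : 'I_N) (x : rat) : Prop :=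
  exists f : 'I_N -> int, [/\ int_antinef prox f, is_xiF prox hatd f x &
                              lambdaF prox hatd f nu = x].

From HB Require Import structures.
From mathcomp Require Import all_boot all_order all_algebra.
From mathcomp Require Import ring lra zify.
Set Implicit Arguments. Unset Strict Implicit. Unset Printing Implicit Defensive.
Import Order.TTheory GRing.Theory Num.Theory.
Local Open Scope ring_scope.

(* Suppose every vertex nu in S = {nu | lambda(F,D;nu) = xi} has valence <= 2
   and hatd_nu = 0.  The divisor A = F + K + sum_mu E_mu - xi D is effective
   and vanishes exactly on S.  For nu in S, D.E_nu = -hatd_nu = 0, F.E_nu <= 0
   and K.E_nu = -2 - E_nu^2, so 0 <= A.E_nu <= (sum_{mu <> nu} E_mu.E_nu) - 2
   <= valence - 2 <= 0.  Equality throughout says that Z = sum_{nu in S} E_nu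
   satisfies (K + Z).E_nu = 0 on S, hence (K + Z).Z = 0.  But writing
   Z = sum_j c_j E*_j, one has (K + Z).Z = - sum_j (1 + c_j) c_j with integral
   c_j and c_j = 1 at the first point of S, so (K + Z).Z <= -2. *)

Lemma sumr_delta (I : finType) (R : pzSemiRingType) (F : I -> R) (i : I) :
  \sum_j (i == j)%:R * F j = F i.
Proof.
rewrite (bigD1 i) //= eqxx mul1r big1 ?addr0 // => j ji.
by rewrite eq_sym (negbTE ji) mul0r.
Qed.

Lemma int_addl1_mul_ge0 (n : int) : 0 <= (1 + n) * n.
Proof. by nia. Qed.

Section Proximity.
Variables (N : nat) (prox : rel 'I_N).
Local Notation U := (Umx prox).
Local Notation V := (invmx (Umx prox)).

(* Coefficient of E*_j in sum_mu f mu E_mu. *)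
Definition estar (f : 'I_N -> rat) (j : 'I_N) : rat := \sum_mu f mu * U mu j.

Lemma UmxE mu j : U mu j = (mu == j)%:R - (prox j mu)%:R.
Proof. by rewrite mxE. Qed.

Lemma interE_Umx mu nu : interE prox mu nu = - \sum_j U mu j * U nu j.
Proof. by rewrite 2!mxE; congr (- _); apply: eq_bigr => j _; rewrite [_^T _ _]mxE. Qed.

Lemma interE_sym mu nu : interE prox mu nu = interE prox nu mu.
Proof. by rewrite !interE_Umx; congr (- _); apply: eq_bigr => j _; rewrite mulrC. Qed.

Lemma interE_offdiag mu nu : mu != nu ->
  interE prox mu nu = (prox nu mu)%:R + (prox mu nu)%:R
                      - \sum_j (prox j mu)%:R * (prox j nu)%:R.
Proof.
move=> mu_nu; rewrite interE_Umx.
rewrite (eq_bigr (fun j => (mu == j)%:R * ((nu == j)%:R - (prox j nu)%:R)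
    - (nu == j)%:R * (prox j mu)%:R + (prox j mu)%:R * (prox j nu)%:R)); last first.
  by move=> j _; rewrite !UmxE; ring.
rewrite eq_sym in mu_nu.
rewrite big_split sumrB /= !sumr_delta (negbTE mu_nu) /=; ring.
Qed.

Lemma dotE_estar f nu : dotE prox f nu = - \sum_j estar f j * U nu j.
Proof.
rewrite /dotE; under eq_bigr do rewrite interE_Umx mulrN mulr_sumr.
rewrite sumrN exchange_big /=; congr (- _); apply: eq_bigr => j _.
by rewrite /estar mulr_suml; apply: eq_bigr => mu _; rewrite mulrA.
Qed.

Lemma sum_mul_dotE f g :
  \sum_nu g nu * dotE prox f nu = - \sum_j estar f j * estar g j.
Proof.
under eq_bigr do rewrite dotE_estar mulrN mulr_sumr.
rewrite sumrN exchange_big /=; congr (- _); apply: eq_bigr => j _.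
by rewrite /estar mulr_sumr; apply: eq_bigr => nu _; rewrite mulrCA mulrA.
Qed.

Lemma estarD f g j : estar (fun mu => f mu + g mu) j = estar f j + estar g j.
Proof. by rewrite /estar -big_split; apply: eq_bigr => mu _; rewrite mulrDl. Qed.

Hypothesis prox_lt : forall j i : 'I_N, prox j i -> (i < j)%N.

Lemma prox_irrefl i : prox i i = false.
Proof. by apply/negP => /prox_lt; rewrite ltnn. Qed.

Lemma Umx_unitmx : U \in unitmx.
Proof.
rewrite unitmxE -det_tr det_trig.
  rewrite big1 ?unitr1 // => i _.
  by rewrite mxE UmxE eqxx prox_irrefl subr0.
apply/is_trig_mxP => i j lt_ij; rewrite mxE UmxE -val_eqE gtn_eqF //.
by case: (boolP (prox i j)) => [/prox_lt|]; [rewrite ltnNge ltnW | rewrite subr0].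
Qed.

Lemma estar_kcoef j : estar (kcoef prox) j = 1.
Proof.
have -> : estar (kcoef prox) j = ((const_mx 1 : 'rV_N) *m V *m U) 0 j.
  by rewrite mxE; apply: eq_bigr => mu _.
by rewrite mulmxKV ?Umx_unitmx // mxE.
Qed.

Lemma dotE_kcoef nu : dotE prox (kcoef prox) nu + interE prox nu nu = -2.
Proof.
rewrite dotE_estar interE_Umx -opprD -big_split /=.
rewrite (eq_bigr (fun j => (nu == j)%:R * 2)) ?sumr_delta // => j _.
rewrite estar_kcoef UmxE; case: eqVneq => [<-|_]; first by rewrite prox_irrefl /=; ring.
by case: (prox j nu) => /=; ring.
Qed.

Lemma adjunction_reduced_le (S : {set 'I_N}) : S != set0 ->
  \sum_(nu in S) dotE prox (fun mu => kcoef prox mu + (mu \in S)%:R) nu <= -2.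
Proof.
case/set0Pn => nu0 nu0S; set z := fun mu : 'I_N => (mu \in S)%:R : rat.
have -> : \sum_(nu in S) dotE prox (fun mu => kcoef prox mu + z mu) nu
        = \sum_nu z nu * dotE prox (fun mu => kcoef prox mu + z mu) nu.
  by rewrite big_mkcond; apply: eq_bigr => nu _; rewrite /z; case: (nu \in S);
    rewrite ?mul1r ?mul0r.
rewrite sum_mul_dotE lerN2; under eq_bigr do rewrite estarD estar_kcoef.
have estar_z_int j : exists n : int, estar z j = n%:~R.
  exists (\sum_mu (mu \in S)%:Z * ((mu == j)%:Z - (prox j mu)%:Z)).
  by rewrite mulrz_sumr; apply: eq_bigr => mu _; rewrite UmxE intrM intrB -!pmulrn.
case: (arg_minnP (fun i : 'I_N => val i) nu0S) => j0 j0S j0_min.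
have estar_z_min : estar z j0 = 1.
  have j0S' : (j0 \in S) = true := j0S.
  rewrite /estar (bigD1 j0) //= big1 ?addr0.
    by rewrite /z j0S' UmxE eqxx prox_irrefl /= subr0 mulr1.
  move=> mu mu_j0; rewrite UmxE (negbTE mu_j0) /z.
  case: (boolP (mu \in S)) => [muS|]; last by rewrite mul0r.
  have /negbTE -> : ~~ prox j0 mu by apply/negP => /prox_lt; rewrite ltnNge j0_min.
  by rewrite subrr mulr0.
rewrite (bigD1 j0) //= estar_z_min -[2]addr0 lerD //.
apply: sumr_ge0 => j _; have [n ->] := estar_z_int j.
by rewrite -[1]/(1%:~R) -intrD -intrM ler0z int_addl1_mul_ge0.
Qed.

Lemma invmx_UmxE i j : V i j = (i == j)%:R + \sum_k V i k * (prox j k)%:R.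
Proof.
have /matrixP/(_ i j) := mulVmx Umx_unitmx; rewrite !mxE => VU_ij.
rewrite -VU_ij (eq_bigr (fun k => (j == k)%:R * V i k - V i k * (prox j k)%:R)).
  by rewrite sumrB sumr_delta subrK.
by move=> k _; rewrite UmxE mulrBr eq_sym mulrC.
Qed.

Lemma invmx_Umx_ge0 i j : 0 <= V i j.
Proof.
have [n] := ubnP j; elim: n j => // n IH j lt_jn.
rewrite invmx_UmxE addr_ge0 ?ler0n // sumr_ge0 // => k _.
case: (boolP (prox j k)) => [/prox_lt lt_kj|]; last by rewrite mulr0.
by rewrite mulr1 IH // (leq_trans lt_kj).
Qed.

Lemma interE_mul_invmx : interE prox *m - (V^T *m V) = 1%:M.
Proof.
rewrite mulmxN mulNmx opprK !mulmxA -(mulmxA U) -trmx_mul mulVmx ?Umx_unitmx //.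
by rewrite trmx1 mulmx1 mulmxV ?Umx_unitmx.
Qed.

Lemma interE_unitmx : interE prox \in unitmx.
Proof. by have [] := mulmx1_unit interE_mul_invmx. Qed.

Lemma hatEmxE : hatEmx prox = V^T *m V.
Proof.
by rewrite /hatEmx -[invmx _]mulmx1 -interE_mul_invmx mulKmx ?interE_unitmx // opprK.
Qed.

Lemma dotE_Dcoef hatd nu : dotE prox (Dcoef prox hatd) nu = - (hatd nu)%:R.
Proof.
transitivity (\sum_k (hatd k)%:R * (hatEmx prox *m interE prox) k nu).
  rewrite /dotE /Dcoef; under eq_bigr do rewrite mulr_suml.
  rewrite exchange_big; apply: eq_bigr => k _ /=.
  by rewrite mxE mulr_sumr; apply: eq_bigr => mu _; rewrite mulrA.
rewrite /hatEmx mulNmx mulVmx ?interE_unitmx //.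
by under eq_bigr => k _ do rewrite !mxE mulrN mulrC eq_sym; rewrite sumrN sumr_delta.
Qed.

Lemma dotE_gap (f : 'I_N -> rat) hatd x nu :
  dotE prox (fun mu => f mu + kcoef prox mu + 1 - x * Dcoef prox hatd mu) nu
  = dotE prox f nu + \sum_(mu | mu != nu) interE prox mu nu - 2 + x * (hatd nu)%:R.
Proof.
rewrite {1}/dotE (eq_bigr (fun mu => f mu * interE prox mu nu
    + kcoef prox mu * interE prox mu nu + interE prox mu nu
    - x * (Dcoef prox hatd mu * interE prox mu nu))); last by move=> mu _; ring.
rewrite sumrB -mulr_sumr !big_split /=.
rewrite -[\sum_mu Dcoef _ _ _ * _]/(dotE prox (Dcoef prox hatd) nu) dotE_Dcoef.
rewrite -[\sum_mu kcoef _ _ * _]/(dotE prox (kcoef prox) nu).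
rewrite -[\sum_mu f _ * _]/(dotE prox f nu) (bigD1 nu) //= -(dotE_kcoef nu); ring.
Qed.

Hypothesis prox_exists : forall j : 'I_N, (0 < j)%N -> exists i, prox j i.

Lemma invmx_Umx_first_ge1 i j : val i = 0%N -> 1 <= V i j.
Proof.
move=> i0; have [n] := ubnP j; elim: n j => // n IH j lt_jn.
rewrite invmx_UmxE; case: (posnP j) => [j0|j_gt0].
  have -> : i = j by apply: val_inj => /=; rewrite i0 j0.
  by rewrite eqxx lerDl sumr_ge0 // => k _; rewrite mulr_ge0 ?invmx_Umx_ge0.
have [k prox_jk] := prox_exists j_gt0.
apply: ler_wpDl; first exact: ler0n.
apply: le_trans (IH k (leq_trans (prox_lt prox_jk) lt_jn)) _.
rewrite (bigD1 k) //= prox_jk mulr1 lerDl sumr_ge0 // => l _.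
by rewrite mulr_ge0 ?invmx_Umx_ge0.
Qed.

Lemma hatEmx_ge1 nu mu : 1 <= hatEmx prox nu mu.
Proof.
pose first : 'I_N := Ordinal (leq_ltn_trans (leq0n _) (ltn_ord nu)).
rewrite hatEmxE mxE (bigD1 first) //= mxE.
apply: ler_wpDr; first by rewrite sumr_ge0 // => i _; rewrite mxE mulr_ge0 ?invmx_Umx_ge0.
by rewrite -[1]mulr1 ler_pM ?invmx_Umx_first_ge1.
Qed.

Lemma Dcoef_gt0 hatd mu : (exists nu, (0 < hatd nu)%N) -> 0 < Dcoef prox hatd mu.
Proof.
case=> nu hatd_nu; rewrite /Dcoef (bigD1 nu) //=.
apply: ltr_wpDr.
  by rewrite sumr_ge0 // => k _; rewrite mulr_ge0 // (le_trans ler01 (hatEmx_ge1 _ _)).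
by rewrite mulr_gt0 ?ltr0n // (lt_le_trans ltr01 (hatEmx_ge1 _ _)).
Qed.

Hypothesis prox_satellite :
  forall j i k : 'I_N, prox j i -> prox j k -> (i < k)%N -> prox k i.
Hypothesis prox_meet_once : forall j j' i k : 'I_N,
  prox j i -> prox j' i -> prox j k -> prox j' k -> (i < k)%N -> j = j'.

Lemma interE_offdiag_bounds mu nu : mu != nu -> 0 <= interE prox mu nu <= 1.
Proof.
wlog lt_mu_nu : mu nu / (mu < nu)%N.
  move=> H mu_nu; case: (ltngtP mu nu) => [lt_mu_nu|gt_mu_nu|eq_mu_nu]; first exact: H.
    by rewrite interE_sym; apply: H; rewrite // eq_sym.
  by move: mu_nu; rewrite (val_inj eq_mu_nu) eqxx.
move=> mu_nu; rewrite interE_offdiag //.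
have -> : prox mu nu = false by apply/negP => /prox_lt; rewrite ltnNge ltnW.
case: (pickP (fun l => prox l mu && prox l nu)) => [l /andP [l_mu l_nu]|none].
  rewrite (prox_satellite l_mu l_nu lt_mu_nu) (bigD1 l) //= l_mu l_nu big1 ?addr0.
    by rewrite subrr lexx ler01.
  move=> j j_l; case: (boolP (prox j mu)) => [j_mu|]; last by rewrite mul0r.
  case: (boolP (prox j nu)) => [j_nu|]; last by rewrite mulr0.
  by move: j_l; rewrite (prox_meet_once j_mu l_mu j_nu l_nu lt_mu_nu) eqxx.
rewrite big1 => [|j _]; last by have := none j; case: (prox j mu); case: (prox j nu).
by case: (prox nu mu); rewrite /= ?subr0 ?addr0 ?lexx ?ler01.
Qed.

Lemma sum_interE_le_valence nu :
  \sum_(mu | mu != nu) interE prox mu nu <= (valence prox nu)%:R.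
Proof.
apply: le_trans (_ : _ <= \sum_(mu | mu != nu) (nat_of_bool (0 < interE prox mu nu))%:R) _.
  apply: ler_sum => mu mu_nu; have /andP [_ le1] := interE_offdiag_bounds mu_nu.
  by case: ltP.
rewrite /valence -sum1_card natr_sum big_mkcond [X in _ <= X]big_mkcond /=.
by apply: ler_sum => mu _; rewrite inE; case: (mu != nu); case: (0 < _).
Qed.

Lemma dotE_K_add_zero_set (g : 'I_N -> rat) nu :
  (forall mu, 0 <= g mu) -> g nu = 0 -> (valence prox nu <= 2)%N ->
  dotE prox g nu <= \sum_(mu | mu != nu) interE prox mu nu - 2 ->
  dotE prox (fun mu => kcoef prox mu + (mu \in [set mu | g mu == 0])%:R) nu = 0.
Proof.
move=> g_ge0 g_nu valence_le2 dot_le; set S := [set mu | g mu == 0].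
have off_ge0 mu : mu != nu -> 0 <= g mu * interE prox mu nu.
  by move=> mu_nu; have /andP [I_ge0 _] := interE_offdiag_bounds mu_nu; rewrite mulr_ge0.
have dot_off : dotE prox g nu = \sum_(mu | mu != nu) g mu * interE prox mu nu.
  by rewrite /dotE (bigD1 nu) //= g_nu mul0r add0r.
have sum_le2 : \sum_(mu | mu != nu) interE prox mu nu <= 2.
  by apply: le_trans (sum_interE_le_valence nu) _; rewrite (ler_nat _ _ 2).
have dot_ge0 : 0 <= dotE prox g nu by rewrite dot_off sumr_ge0.
have sum_eq2 : \sum_(mu | mu != nu) interE prox mu nu = 2 by lra.
have off_S mu : mu != nu -> mu \notin S -> interE prox mu nu = 0.
  move=> mu_nu; rewrite inE => g_mu_neq0.
  have sum_off0 : \sum_(mu | mu != nu) g mu * interE prox mu nu = 0.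
    by rewrite -dot_off; lra.
  have /eqP := psumr_eq0P off_ge0 sum_off0 mu_nu.
  by rewrite mulf_eq0 (negbTE g_mu_neq0) => /eqP.
have z_off : \sum_(mu | mu != nu) (mu \in S)%:R * interE prox mu nu
           = \sum_(mu | mu != nu) interE prox mu nu.
  apply: eq_bigr => mu mu_nu; case: (boolP (mu \in S)) => [_|mu_S]; first exact: mul1r.
  by rewrite mul0r off_S.
have nu_S : (nu \in S) = true by rewrite inE g_nu.
rewrite /dotE; under eq_bigr do rewrite mulrDl.
rewrite big_split /= [X in _ + X](bigD1 nu) //= nu_S mul1r z_off sum_eq2.
by rewrite -[\sum_mu kcoef _ _ * _]/(dotE prox (kcoef prox) nu) addrA dotE_kcoef addNr.
Qed.

Lemma jumping_vertex hatd (f : 'I_N -> int) x :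
  (exists nu, (0 < hatd nu)%N) -> int_antinef prox f -> is_xiF prox hatd f x ->
  exists nu, lambdaF prox hatd f nu = x /\
             ((3 <= valence prox nu)%N \/ (0 < hatd nu)%N).
Proof.
move=> hatd_pos f_antinef [[nu0 lambda_nu0] lambda_min].
have D_gt0 mu : 0 < Dcoef prox hatd mu := Dcoef_gt0 mu hatd_pos.
pose g mu := (f mu)%:~R + kcoef prox mu + 1 - x * Dcoef prox hatd mu.
have gE mu : g mu = (lambdaF prox hatd f mu - x) * Dcoef prox hatd mu.
  by rewrite /lambdaF mulrBl divfK // lt0r_neq0.
have g_ge0 mu : 0 <= g mu by rewrite gE mulr_ge0 ?subr_ge0 ?lambda_min ?(ltW (D_gt0 mu)).
have g_eq0 mu : (g mu == 0) = (lambdaF prox hatd f mu == x).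
  by rewrite gE mulf_eq0 subr_eq0 (gt_eqF (D_gt0 mu)) orbF.
set S := [set mu | g mu == 0].
case: (boolP [exists nu in S, (2 < valence prox nu)%N || (0 < hatd nu)%N]).
  case/exists_inP => nu; rewrite inE g_eq0 => /eqP lambda_nu /orP star.
  by exists nu; split.
rewrite negb_exists_in => /forall_inP no_star; exfalso.
have K_Z_orth : \sum_(nu in S) dotE prox (fun mu => kcoef prox mu + (mu \in S)%:R) nu = 0.
  apply: big1 => nu nu_S; move: (no_star nu nu_S).
  rewrite negb_or -leqNgt -eqn0Ngt => /andP [valence_le2 /eqP hatd_nu0].
  apply: dotE_K_add_zero_set => //; first by move: nu_S; rewrite inE => /eqP.
  by rewrite (dotE_gap (fun mu => (f mu)%:~R)) hatd_nu0 mulr0 addr0; have := f_antinef nu; lra.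
have S_neq0 : S != set0 by apply/set0Pn; exists nu0; rewrite inE g_eq0 lambda_nu0.
by have := adjunction_reduced_le S_neq0; rewrite K_Z_orth; lra.
Qed.

End Proximity.

Theorem mainTheorem13 (N : nat) (prox : rel 'I_N) (hatd : 'I_N -> nat) :
  blowup_proximity prox ->
  (exists nu, (0 < hatd nu)%N) ->
  (forall (x : rat) (f : 'I_N -> int),
      jumping_number prox hatd x -> int_antinef prox f -> is_xiF prox hatd f x ->
      exists nu : 'I_N, lambdaF prox hatd f nu = x /\
                        ((3 <= valence prox nu)%N \/ (0 < hatd nu)%N))
  /\
  (forall x : rat, jumping_number prox hatd x ->
      exists nu : 'I_N, ((3 <= valence prox nu)%N \/ (0 < hatd nu)%N) /\
                        Hset prox hatd nu x).
Proof.
case=> prox_lt prox_exists _ prox_satellite prox_meet_once hatd_pos.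
have vertex := jumping_vertex prox_lt prox_exists prox_satellite prox_meet_once hatd_pos.
split=> [x f _ | x [f [f_antinef x_xi]]]; first exact: vertex.
have [nu [lambda_nu star]] := vertex f x f_antinef x_xi.
by exists nu; split=> //; exists f.
Qed.
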